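(* Let $(U,\mathrm{dist})$ be a metric space, $\gamma>0$, $\eta>0$, $\Lambda\in\mathbb{R}_{>0}\cup\{\infty\}$, $p>1$, $\theta\ge1$, $m\ge1$. Let $f:U\to\mathbb{R}^m$, where $\mathbb{R}^m$ is equipped with the $\ell_1$ metric, and let $B(\cdot)$ be a $g_E$-smooth upper bound on $\mathrm{L}_{f,\Lambda}$, where $g_E(x,x')=e^{\gamma\,\mathrm{dist}(x,x')}$. Then the mechanism $M$ which on input $x$ releases $M(x)=f(x)+\frac{B(x)}{\eta}Z$, where $Z=(Z_1,\dots,Z_m)$ with $Z_j$ i.i.d. $\mathrm{GenCauchy}(0,1,p,\theta)$, is $(\varepsilon,0,\Lambda)$-GP, where $\varepsilon=\max(m\gamma,m(p\theta-1)\gamma)+(p-1)^{\frac{p-1}{p}}\theta\eta$.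
   Context: $\mathrm{L}_{f,\Lambda}(x)$ is the infimum of all $K$ such that $\|f(x)-f(x')\|_1\le K\,\mathrm{dist}(x,x')$ for all $x'\in U$ with $\mathrm{dist}(x,x')\le\Lambda$. A $g$-smooth upper bound on $\mathrm{L}_{f,\Lambda}$ is $B:U\to\mathbb{R}_{\ge0}$ with (1) $B(x)\ge\mathrm{L}_{f,\Lambda}(x)$ for all $x$ and (2) $B(x)\le g(x,x')B(x')$ for all $x,x'\in U$. $\mathrm{GenCauchy}(0,1,p,\theta)$ is the distribution on $\mathbb{R}$ with density $c_{p,\theta}(1+|y|^p)^{-\theta}$, $c_{p,\theta}=\frac{p\Gamma(\theta)}{2\Gamma(1/p)\Gamma(\theta-1/p)}$. A mechanism $M$ with outputs in $\mathbb{R}^m$ is $(\varepsilon,\delta,\Lambda)$-GP if for every measurable $S\subseteq\mathbb{R}^m$ and all $x,x'$ with $\mathrm{dist}(x,x')\le\Lambda$: $\Pr[M(x)\in S]\le e^{\varepsilon\,\mathrm{dist}(x,x')}\Pr[M(x')\in S]+\delta$. *)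

From HB Require Import structures.
From mathcomp Require Import all_boot all_order all_algebra.
From mathcomp Require Import all_classical all_reals all_analysis.
Set Implicit Arguments. Unset Strict Implicit. Unset Printing Implicit Defensive.
Import Order.TTheory GRing.Theory Num.Theory.
Import numFieldNormedType.Exports.
Local Open Scope classical_set_scope.
Local Open Scope ring_scope.

Section Defs.
Variable R : realType.

Definition is_metric (U : Type) (dist : U -> U -> R) : Prop :=
  [/\ forall x y, 0 <= dist x y,
      forall x y, dist x y = 0 <-> x = y,
      forall x y, dist x y = dist y x &
      forall x y z, dist x z <= dist x y + dist y z].

Definition l1dist (m : nat) (a b : m.-tuple R) : R :=
  \sum_(i < m) `|tnth a i - tnth b i|.

Definition localLip (U : Type) (dist : U -> U -> R) (m : nat)
  (f : U -> m.-tuple R) (Lambda : \bar R) (x : U) : \bar R :=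
  ereal_inf [set (K%:E) | K in [set K : R | 0 <= K /\
     forall x', ((dist x x')%:E <= Lambda)%E ->
       l1dist (f x) (f x') <= K * dist x x']].

Definition smooth_upper_bound (U : Type) (dist : U -> U -> R) (m : nat)
  (f : U -> m.-tuple R) (Lambda : \bar R) (g : U -> U -> R) (B : U -> R) : Prop :=
  [/\ forall x, 0 <= B x,
      forall x, (localLip dist f Lambda x <= (B x)%:E)%E
    & forall x x', B x <= g x x' * B x'].

Definition Gamma (s : R) : R :=
  fine (\int[@lebesgue_measure R]_(t in `]0%R, +oo[) ((t `^ (s - 1)) * expR (- t))%:E)%E.

Definition gencauchy_c (p theta : R) : R :=
  p * Gamma theta / (2 * Gamma (p^-1) * Gamma (theta - p^-1)).

Definition gencauchy_pdf (p theta : R) (y : R) : R :=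
  gencauchy_c p theta * (1 + `|y| `^ p) `^ (- theta).

Fixpoint iter_integral (n : nat) : (n.-tuple R -> \bar R) -> \bar R :=
  match n return (n.-tuple R -> \bar R) -> \bar R with
  | 0 => fun F => F [tuple]
  | n'.+1 => fun F =>
      (\int[@lebesgue_measure R]_t iter_integral (fun z : n'.-tuple R => F [tuple of t :: z]))%E
  end.

(* Pr[ f(x) + (B(x)/eta) Z \in S ], Z_j iid GenCauchy(0,1,p,theta) *)
Definition gencauchy_mech_prob (U : Type) (m : nat) (f : U -> m.-tuple R)
  (B : U -> R) (eta p theta : R) (x : U) (S : set (m.-tuple R)) : \bar R :=
  iter_integral (fun z : m.-tuple R =>
    ((\1_S [tuple tnth (f x) i + B x / eta * tnth z i | i < m] : R)
      * \prod_(j < m) gencauchy_pdf p theta (tnth z j))%:E).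

Definition GP (U : Type) (dist : U -> U -> R) (m : nat)
  (Pr : U -> set (m.-tuple R) -> \bar R) (eps delta : R) (Lambda : \bar R) : Prop :=
  forall S : set (m.-tuple R), measurable S ->
  forall x x', ((dist x x')%:E <= Lambda)%E ->
    (Pr x S <= (expR (eps * dist x x'))%:E * Pr x' S + delta%:E)%E.

End Defs.

From HB Require Import structures.
From mathcomp Require Import all_boot all_order all_algebra.
From mathcomp Require Import all_classical all_reals all_analysis.
From mathcomp Require Import measurable_realfun lra ring.
Set Implicit Arguments. Unset Strict Implicit. Unset Printing Implicit Defensive.
Import Order.TTheory GRing.Theory Num.Theory.
Import numFieldNormedType.Exports.
Local Open Scope classical_set_scope.
Local Open Scope ring_scope.

(* Write the density of [Z_j] as [c * exp (- theta * ln (1 + |y| ^ p))].  The map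
   [s |-> ln (1 + s ^ p)] is Lipschitz on [[0, +oo[] with constant
   [(p - 1) ^ ((p - 1) / p)], by Young's inequality on its derivative, so
   translating the density by [d] multiplies it by at most
   [exp (theta (p - 1) ^ ((p - 1) / p) |d|)], while dilating it by [r] costs at
   most [exp (max 1 (p theta - 1) |ln r|)].  The substitution [z = a + r w] with
   [r = B x' / B x] and [a = eta (f x' - f x) / B x] turns [Pr [M x \in S]] into
   [Pr [M x' \in S]] weighted by these ratios; the smoothness of [B] gives
   [|ln r| <= gamma dist x x'] and the local Lipschitz bound at [x'] gives
   [eta |f x' - f x|_1 / B x' <= eta dist x x']. *)

(* The integrand of [iter_integral] is not known to be measurable, so
   nonnegative integrals are handled through their definition as suprema of
   integrals of simple functions. *)
Section ge0_integralT.
Local Open Scope ereal_scope.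
Context d (T : measurableType d) (R : realType) (mu : {measure set T -> \bar R}).
Import HBNNSimple.

Lemma ge0_le_integralT (F G : T -> \bar R) :
  (forall t, 0 <= F t) -> (forall t, F t <= G t) ->
  \int[mu]_t F t <= \int[mu]_t G t.
Proof.
move=> F0 FG; have G0 t : 0 <= G t := le_trans (F0 t) (FG t).
rewrite !ge0_integralTE //; apply: ereal_sup_le => _ [h hF <-]; exists h => //.
by move=> t; exact: le_trans (hF t) (FG t).
Qed.

Lemma ge0_integralT_le_ub (F : T -> \bar R) (X : \bar R) : (forall t, 0 <= F t) ->
  (forall h : {nnsfun T >-> R}, (forall t, (h t)%:E <= F t) ->
     \int[mu]_t (h t)%:E <= X) ->
  \int[mu]_t F t <= X.
Proof.
move=> F0 hX; rewrite ge0_integralTE //; apply: ge_ereal_sup => _ [h hF <-].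
by rewrite -integralT_nnsfun; exact: hX.
Qed.

Lemma ge0_integralZlT_le (F : T -> \bar R) (c : R) : (0 <= c)%R ->
  (forall t, 0 <= F t) -> \int[mu]_t (c%:E * F t) <= c%:E * \int[mu]_t F t.
Proof.
move=> c0 F0; have [->|c_neq0] := eqVneq c 0%R.
  by rewrite mul0e (eq_integral (cst 0)) ?integral0 // => t _; rewrite mul0e.
have c_gt0 : (0 < c)%R by rewrite lt_def c_neq0 c0.
apply: ge0_integralT_le_ub => [t|h hF]; first by rewrite mule_ge0.
have mh : measurable_fun setT (fun t => ((c^-1 * h t)%R)%:E).
  by apply/measurable_EFinP; apply: measurable_funM.
rewrite (eq_integral (fun t => c%:E * ((c^-1 * h t)%R)%:E)); last first.
  by move=> t _; rewrite -EFinM mulrA mulfV // mul1r.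
rewrite ge0_integralZl_EFin //; last by move=> t _; rewrite lee_fin mulr_ge0 ?invr_ge0.
apply: lee_wpmul2l; first by rewrite lee_fin.
apply: ge0_le_integralT => t.
  by rewrite lee_fin mulr_ge0 ?invr_ge0.
by rewrite -(@lee_pmul2l _ c%:E) ?lte_fin // -EFinM mulrA mulfV // mul1r.
Qed.

Lemma ge0_integralZlT (F : T -> \bar R) (c : R) : (0 <= c)%R ->
  (forall t, 0 <= F t) -> \int[mu]_t (c%:E * F t) = c%:E * \int[mu]_t F t.
Proof.
move=> c0 F0; apply/eqP; rewrite eq_le ge0_integralZlT_le //=.
have [->|c_neq0] := eqVneq c 0%R.
  by rewrite mul0e integral_ge0 // => t _; rewrite mul0e.
have c_gt0 : (0 < c)%R by rewrite lt_def c_neq0 c0.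
rewrite -(@lee_pmul2l _ c^-1%:E) ?lte_fin ?invr_gt0 // muleA -EFinM mulVf // mul1e.
have -> : \int[mu]_t F t = \int[mu]_t (c^-1%:E * (c%:E * F t)).
  by apply: eq_integral => t _; rewrite muleA -EFinM mulVf ?mul1e.
by apply: ge0_integralZlT_le => [|t]; rewrite ?invr_ge0 ?mule_ge0 ?lee_fin.
Qed.

End ge0_integralT.

Section lebesgue_affine.
Context (R : realType).
Local Notation lam := (@lebesgue_measure R).

Lemma measurable_fun_affine (a r : R) : @measurable_fun _ _
  (measurableTypeR R) (measurableTypeR R) [set: R] (fun t => a + r * t).
Proof. by apply: measurable_funD => //; exact: measurable_funM. Qed.

Lemma affine_preimage_itv (a r x1 x2 : R) : 0 < r ->
  (fun t => a + r * t) @^-1` `]x1, x2] = `](x1 - a) / r, (x2 - a) / r]%classic.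
Proof.
move=> r0; apply/seteqP; split => t /=; rewrite !in_itv /= ltr_pdivrMr // ler_pdivlMr //.
  by rewrite ltrBlDl lerBrDl mulrC.
by rewrite ltrBlDl lerBrDl mulrC.
Qed.

Lemma lebesgue_measure_affine_preimage (a r : R) (A : set R) : 0 < r ->
  measurable A -> (lam ((fun t => (a + r * t)%R) @^-1` A) = r^-1%:E * lam A)%E.
Proof.
move=> r0 mA; pose mu : measure (measurableTypeR R) R := mscale (NngNum (ltW r0))
  (measure_function_pushforward__canonical__measure_function_Measure lam
    (measurable_fun_affine a r)).
rewrite -[LHS]mul1e -(mulVf (lt0r_neq0 r0)) EFinM -muleA.
rewrite [X in (_ * X)%E](_ : _ = mu A) // (@lebesgue_measure_unique R mu) //.
move=> _ [[x1 x2] _ <-].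
change (lam `]x1, x2] = r%:E * lam ((fun t => a + r * t)%R @^-1` `]x1, x2]))%E.
rewrite affine_preimage_itv //.
rewrite !lebesgue_measure_itv /= !lte_fin ltr_pM2r ?invr_gt0 // ltrD2r.
case: ifP => _; last by rewrite mule0.
by rewrite -EFinM -EFinD; congr (_%:E); field; exact: lt0r_neq0.
Qed.

Import HBNNSimple.

Lemma integral_affine_nnsfun (h : {nnsfun (measurableTypeR R) >-> R}) (a r : R) :
  0 < r -> (\int[lam]_t (h (a + r * t)%R)%:E = r^-1%:E * \int[lam]_t (h t)%:E)%E.
Proof.
move=> r0; have mh : measurable_fun setT (EFin \o h).
  by apply/measurable_EFinP; exact: measurable_funP.
have h0 (y : R) : y \in setT -> (0 <= (EFin \o h) y)%E by rewrite /= lee_fin.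
have := ge0_integral_pushforward (measurable_fun_affine a r) lam measurableT mh h0.
rewrite preimage_setT => <-.
have r0' : 0 <= r^-1 by rewrite invr_ge0 (ltW r0).
rewrite -(ge0_integral_mscale _ _ (NngNum r0')) //; last first.
  by move=> y _; rewrite /= lee_fin.
apply: eq_measure_integral => [|mf A mA _]; first exact: measurable_fun_affine.
exact: lebesgue_measure_affine_preimage.
Qed.

Lemma ge0_integral_affine_le (F : R -> \bar R) (a r : R) : 0 < r ->
  (forall t, 0 <= F t)%E ->
  (\int[lam]_t F t <= r%:E * \int[lam]_t F (a + r * t)%R)%E.
Proof.
move=> r0 F0; apply: ge0_integralT_le_ub => // h hF.
rewrite -[X in (X <= _)%E]mul1e -(mulfV (lt0r_neq0 r0)) EFinM -muleA.
rewrite -(integral_affine_nnsfun h a) //.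
apply: lee_wpmul2l; first by rewrite lee_fin (ltW r0).
by apply: ge0_le_integralT => t; rewrite ?lee_fin.
Qed.

End lebesgue_affine.

Section iter_integral.
Context (R : realType).
Local Open Scope ereal_scope.

Lemma iter_integral_ge0 n (F : n.-tuple R -> \bar R) :
  (forall z, 0 <= F z) -> 0 <= iter_integral F.
Proof.
elim: n F => [|n IH] F F0 /=; first exact: F0.
by apply: integral_ge0 => t _; apply: IH.
Qed.

Lemma le_iter_integral n (F G : n.-tuple R -> \bar R) : (forall z, 0 <= F z) ->
  (forall z, F z <= G z) -> iter_integral F <= iter_integral G.
Proof.
elim: n F G => [|n IH] F G F0 FG /=; first exact: FG.
by apply: ge0_le_integralT => t; [exact: iter_integral_ge0 | exact: IH].
Qed.

Lemma iter_integralZl n (F : n.-tuple R -> \bar R) (c : R) : (0 <= c)%R ->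
  (forall z, 0 <= F z) -> iter_integral (fun z => c%:E * F z) = c%:E * iter_integral F.
Proof.
move=> c0; elim: n F => [|n IH] F F0 //=.
rewrite -ge0_integralZlT //; last by move=> t; exact: iter_integral_ge0.
by apply: eq_integral => t _; rewrite IH.
Qed.

Definition affine_tuple n (a : n.-tuple R) (r : R) (z : n.-tuple R) : n.-tuple R :=
  [tuple (tnth a i + r * tnth z i)%R | i < n].

Lemma affine_tuple_cons n a0 (a : n.-tuple R) r t (z : n.-tuple R) :
  affine_tuple [tuple of a0 :: a] r [tuple of t :: z] =
  [tuple of (a0 + r * t)%R :: affine_tuple a r z].
Proof.
apply: eq_from_tnth => i; rewrite tnth_mktuple.
by case: (unliftP ord0 i) => [j ->|->]; rewrite ?tnthS ?tnth_mktuple ?tnth0.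
Qed.

Lemma iter_integral_affine_le n (F : n.-tuple R -> \bar R) (a : n.-tuple R) (r : R) :
  (0 < r)%R -> (forall z, 0 <= F z) ->
  iter_integral F <= iter_integral (fun z => (r ^+ n)%:E * F (affine_tuple a r z)).
Proof.
move=> r0; elim: n F a => [|n IH] F a F0.
  by rewrite /= expr0 mul1e (tuple0 (affine_tuple a r _)) (tuple0 [tuple]).
case/tupleP: a => a0 a /=.
pose G t := iter_integral (fun z => (r ^+ n)%:E * F [tuple of t :: affine_tuple a r z]).
have r_ge0 : (0 <= r)%R := ltW r0.
have rn0 : (0 <= r ^+ n)%R by rewrite exprn_ge0.
have G0 t : 0 <= G t by apply: iter_integral_ge0 => z; rewrite mule_ge0 ?lee_fin.
apply: (@le_trans _ _ (\int[lebesgue_measure]_t G t)).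
  by apply: ge0_le_integralT => t; [exact: iter_integral_ge0 | exact: IH].
apply: (le_trans (ge0_integral_affine_le a0 r0 G0)).
rewrite -ge0_integralZlT // le_eqVlt; apply/orP; left.
apply/eqP/eq_integral => t _.
rewrite /G -iter_integralZl //; last by move=> z; rewrite mule_ge0 ?lee_fin.
by congr iter_integral; apply/funext => z; rewrite affine_tuple_cons muleA -EFinM exprS.
Qed.

End iter_integral.

Section ln1Dpow.
Context (R : realType) (p : R).
Hypothesis p_gt1 : 1 < p.
Local Notation Lp := ((p - 1) `^ ((p - 1) / p)).

Let p_gt0 : 0 < p. Proof. exact: lt_trans p_gt1. Qed.
Let p1_gt0 : 0 < p - 1. Proof. by rewrite subr_gt0. Qed.
Let p_neq0 : p != 0. Proof. exact: lt0r_neq0. Qed.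
Let p1_neq0 : p - 1 != 0. Proof. exact: lt0r_neq0. Qed.
Let Lp_gt0 : 0 < Lp. Proof. exact: powR_gt0. Qed.

Definition ln1Dpow (s : R) := ln (1 + s `^ p).

(* Young's inequality for [c ^ (p - 1)] and [(p - 1) ^ (1 / p)], with the
   conjugate exponents [p / (p - 1)] and [p]. *)
Lemma young_powR_le (c : R) : 0 <= c -> p * c `^ (p - 1) <= Lp * (1 + c `^ p).
Proof.
move=> c0; set b := (p - 1) `^ p^-1.
have b_gt0 : 0 < b by rewrite powR_gt0.
have q_gt0 : 0 < p / (p - 1) by rewrite divr_gt0.
have := conjugate_powR (powR_ge0 c (p - 1)) (ltW b_gt0) q_gt0 p_gt0.
rewrite -!powRrM mulrCA mulfV // mulr1 mulVf // powRr1 ?(ltW p1_gt0) //.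
move=> /(_ ltac:(by field; rewrite p_neq0 p1_neq0)) young.
have -> : Lp = (p - 1) / b.
  have -> : (p - 1) / p = 1 - p^-1 by field.
  by rewrite powRB ?p1_neq0 ?implybT // powRr1 // ltW.
rewrite -(@ler_pM2r _ (b / p)) ?divr_gt0 //.
have -> : p * c `^ (p - 1) * (b / p) = c `^ (p - 1) * b by field.
apply: (le_trans young); rewrite le_eqVlt; apply/orP; left; apply/eqP.
by field; rewrite p_neq0 lt0r_neq0.
Qed.

Lemma ln1Dpow0 : ln1Dpow 0 = 0.
Proof. by rewrite /ln1Dpow powR0 // addr0 ln1. Qed.

Lemma ler_ln1Dpow (s t : R) : 0 <= s -> s <= t -> ln1Dpow s <= ln1Dpow t.
Proof.
move=> s0 st; rewrite /ln1Dpow ler_ln ?posrE ?ltr_pwDl ?powR_ge0 // lerD2l.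
by apply: ge0_ler_powR; rewrite ?nnegrE ?(ltW p_gt0) ?(le_trans s0).
Qed.

Lemma is_derive_ln1Dpow (x : R) : 0 < x ->
  is_derive x 1 ln1Dpow (p * x `^ (p - 1) / (1 + x `^ p)).
Proof.
move=> x0; rewrite mulrC; apply: is_derive1_comp.
  by apply: is_derive1_ln; rewrite ltr_pwDl ?powR_ge0.
by have := is_deriveD (is_derive_cst (1 : R) x 1) (is_derive1_powR p x0); rewrite add0r.
Qed.

Lemma ln1Dpow_lipschitz_pos (s t : R) : 0 < s -> s <= t ->
  ln1Dpow t - ln1Dpow s <= Lp * (t - s).
Proof.
move=> s0 st.
have der x : x \in `]s, t[ ->
    is_derive x 1 ln1Dpow (p * x `^ (p - 1) / (1 + x `^ p)).
  by rewrite in_itv /= => /andP[sx _]; apply: is_derive_ln1Dpow (lt_trans s0 sx).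
have cont : {within `[s, t], continuous ln1Dpow}.
  apply: derivable_within_continuous => x; rewrite in_itv /= => /andP[sx _].
  by have [] := is_derive_ln1Dpow (lt_le_trans s0 sx).
have [c /[!in_itv] /andP[sc _] ->] := MVT_segment st der cont.
apply: ler_wpM2r; first by rewrite subr_ge0.
rewrite ler_pdivrMr ?ltr_pwDl ?powR_ge0 //.
exact/young_powR_le/(le_trans (ltW s0)).
Qed.

(* Mean value theorem on [[t, s]] for a small [t > 0], and
   [ln (1 + t ^ p) <= t * t ^ (p - 1) <= Lp * t] on [[0, t]]. *)
Lemma ln1Dpow_le (s : R) : 0 <= s -> ln1Dpow s <= Lp * s.
Proof.
rewrite le_eqVlt => /predU1P[<-|s0]; first by rewrite ln1Dpow0 mulr0.
pose t := Num.min s (Lp `^ (p - 1)^-1).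
have t0 : 0 < t by rewrite lt_min s0 powR_gt0.
have tp : t `^ (p - 1) <= Lp.
  have -> : Lp = (Lp `^ (p - 1)^-1) `^ (p - 1).
    by rewrite -powRrM mulVf // powRr1 // ltW.
  apply: ge0_ler_powR; rewrite ?nnegrE ?powR_ge0 ?(ltW p1_gt0) ?(ltW t0) //.
  by rewrite ge_min lexx orbT.
have ht : ln1Dpow t <= Lp * t.
  apply: (le_trans (le_ln1Dx _)).
    by apply: (lt_le_trans _ (powR_ge0 _ _)); rewrite ltrN10.
  rewrite -mulr_powRB1 ?(ltW t0) // mulrC.
  by apply: ler_wpM2r; first exact: ltW.
have ts : t <= s by rewrite ge_min lexx.
have := ln1Dpow_lipschitz_pos t0 ts; lra.
Qed.

Lemma ln1Dpow_lipschitz (s t : R) : 0 <= s -> 0 <= t ->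
  `|ln1Dpow t - ln1Dpow s| <= Lp * `|t - s|.
Proof.
wlog st : s t / s <= t => [hwlog s0 t0|s0 t0].
  have [st|/ltW ts] := leP s t; first exact: hwlog.
  by rewrite distrC (distrC t); exact: hwlog.
rewrite !ger0_norm ?subr_ge0 ?ler_ln1Dpow //.
have [->|s_gt0] := eqVneq s 0; first by rewrite ln1Dpow0 !subr0 ln1Dpow_le.
by apply: ln1Dpow_lipschitz_pos; rewrite // lt_def s_gt0.
Qed.

Lemma ln1Dpow_dilation (r s : R) : 0 < r -> r <= 1 -> 0 <= s ->
  p * ln r + ln1Dpow s <= ln1Dpow (r * s).
Proof.
move=> r0 r1 s0; rewrite /ln1Dpow -ln_powR -lnM ?posrE ?powR_gt0 ?ltr_pwDl ?powR_ge0 //.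
rewrite ler_ln ?posrE ?mulr_gt0 ?powR_gt0 ?ltr_pwDl ?powR_ge0 //.
rewrite powRM ?(ltW r0) // mulrDr mulr1 lerD2r.
suff : r `^ p <= 1 `^ p by rewrite powR1.
by apply: ge0_ler_powR; rewrite ?nnegrE ?ler01 ?(ltW r0) ?(ltW p_gt0).
Qed.

End ln1Dpow.

Lemma Gamma_ge0 (R : realType) (s : R) : 0 <= Gamma s.
Proof.
apply: fine_ge0; apply: integral_ge0 => t _.
by rewrite lee_fin mulr_ge0 ?powR_ge0 ?expR_ge0.
Qed.

Section gencauchy_pdf.
Context (R : realType) (p theta : R).
Hypotheses (p_gt1 : 1 < p) (theta_ge0 : 0 <= theta).
Local Notation Lp := ((p - 1) `^ ((p - 1) / p)).
Local Notation pdf := (gencauchy_pdf p theta).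

Let p_gt0 : 0 < p. Proof. exact: lt_trans p_gt1. Qed.

Lemma gencauchy_c_ge0 : 0 <= gencauchy_c p theta.
Proof. by rewrite divr_ge0 ?mulr_ge0 ?Gamma_ge0 ?(ltW p_gt0). Qed.

Lemma gencauchy_pdfE (y : R) :
  pdf y = gencauchy_c p theta * expR (- theta * ln1Dpow p `|y|).
Proof. by rewrite /gencauchy_pdf /powR gt_eqF // ltr_pwDl ?powR_ge0. Qed.

Lemma gencauchy_pdf_ge0 (y : R) : 0 <= pdf y.
Proof. by rewrite gencauchy_pdfE mulr_ge0 ?gencauchy_c_ge0 ?expR_ge0. Qed.

Lemma gencauchy_pdf_shift (u d : R) : pdf (u + d) <= expR (theta * Lp * `|d|) * pdf u.
Proof.
rewrite !gencauchy_pdfE mulrCA; apply: ler_wpM2l; first exact: gencauchy_c_ge0.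
rewrite -expRD ler_expR.
suff : ln1Dpow p `|u| - ln1Dpow p `|u + d| <= Lp * `|d|.
  by move/(ler_wpM2l theta_ge0); lra.
apply: (le_trans (ler_norm _)); rewrite distrC.
apply: (le_trans (ln1Dpow_lipschitz p_gt1 (normr_ge0 _) (normr_ge0 _))).
apply: ler_wpM2l; first exact: powR_ge0.
by apply: (le_trans (ler_dist_dist _ _)); rewrite addrC addKr.
Qed.

Lemma gencauchy_pdf_dilation (r v s : R) : 0 < r -> `|ln r| <= s ->
  r * pdf (r * v) <= expR (Num.max 1 (p * theta - 1) * s) * pdf v.
Proof.
move=> r0 /ler_normlP[Nlnr_s lnr_s]; have s0 : 0 <= s by lra.
set M := Num.max 1 (p * theta - 1).
have M1 : 1 <= M by rewrite le_max lexx.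
have M2 : p * theta - 1 <= M by rewrite le_max lexx orbT.
rewrite !gencauchy_pdfE mulrCA (mulrCA (expR _)).
apply: ler_wpM2l; first exact: gencauchy_c_ge0.
rewrite -{1}(lnK r0) -!expRD ler_expR normrM (gtr0_norm r0).
have [r1|r1] := leP 1 r.
  have v_le := ler_peMl (normr_ge0 v) r1.
  have := ler_wpM2l theta_ge0 (ler_ln1Dpow p_gt1 (normr_ge0 v) v_le).
  have : ln r <= M * s by rewrite (le_trans lnr_s) // ler_peMl.
  lra.
have := ler_wpM2l theta_ge0 (ln1Dpow_dilation p_gt1 r0 (ltW r1) (normr_ge0 v)).
have lnr_ge0 : 0 <= - ln r by rewrite oppr_ge0 ln_le0 // ltW.
have : (p * theta - 1) * - ln r <= M * s.
  apply: (le_trans (ler_wpM2r lnr_ge0 M2)); apply: ler_wpM2l => //.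
  exact: le_trans ler01 M1.
lra.
Qed.

Lemma gencauchy_pdf_affine (a r z s : R) : 0 < r -> `|ln r| <= s ->
  r * pdf (a + r * z) <=
  expR (Num.max 1 (p * theta - 1) * s + theta * Lp * `|a / r|) * pdf z.
Proof.
move=> r0 lnr_s; have -> : a + r * z = r * (z + a / r) by field; rewrite lt0r_neq0.
apply: (le_trans (gencauchy_pdf_dilation _ r0 lnr_s)).
rewrite expRD -mulrA; apply: ler_wpM2l; first exact: expR_ge0.
exact: gencauchy_pdf_shift.
Qed.

Lemma gencauchy_prod_affine (n : nat) (a z : n.-tuple R) (r s : R) :
  0 < r -> `|ln r| <= s ->
  r ^+ n * \prod_(j < n) pdf (tnth (affine_tuple a r z) j) <=
  expR (n%:R * Num.max 1 (p * theta - 1) * s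
        + theta * Lp * \sum_(j < n) `|tnth a j / r|) *
  \prod_(j < n) pdf (tnth z j).
Proof.
move=> r0 lnr_s; set M := Num.max 1 (p * theta - 1).
have -> : n%:R * M * s + theta * Lp * \sum_(j < n) `|tnth a j / r| =
    \sum_(j < n) (M * s + theta * Lp * `|tnth a j / r|).
  by rewrite big_split /= sumr_const card_ord mulr_sumr -mulrA mulr_natl.
rewrite expR_sum -big_split /=.
have -> : r ^+ n = \prod_(j < n) r by rewrite prodr_const card_ord.
rewrite -big_split /=.
apply: ler_prod => j _.
rewrite mulr_ge0 ?gencauchy_pdf_ge0 ?(ltW r0) // tnth_mktuple.
exact: gencauchy_pdf_affine.
Qed.

End gencauchy_pdf.

Section l1dist.
Context (R : realType).

Lemma l1dist_le0 (m : nat) (a b : m.-tuple R) : l1dist a b <= 0 -> a = b.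
Proof.
rewrite /l1dist => ab0; have : \sum_(i < m) `|tnth a i - tnth b i| == 0.
  by rewrite eq_le ab0 sumr_ge0.
rewrite psumr_eq0 // => /allP ab; apply: eq_from_tnth => i.
by apply/eqP; rewrite -subr_eq0 -normr_eq0; apply: ab; rewrite mem_index_enum.
Qed.

Lemma l1dist_le_localLip (U : Type) (dist : U -> U -> R) (m : nat)
    (f : U -> m.-tuple R) (Lambda : \bar R) (x x' : U) (b : R) :
  (localLip dist f Lambda x <= b%:E)%E -> ((dist x x')%:E <= Lambda)%E ->
  0 <= dist x x' -> l1dist (f x) (f x') <= b * dist x x'.
Proof.
move=> Lb dxx' d0; apply/ler_addgt0Pr => e e0.
have e' : 0 < e / (dist x x' + 1) by rewrite divr_gt0 // ltr_wpDl.
have /ereal_inf_lt[_ [K [_ HK] <-]] :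
    (localLip dist f Lambda x < (b + e / (dist x x' + 1))%:E)%E.
  by apply: le_lt_trans Lb _; rewrite lte_fin ltrDl.
rewrite lte_fin => Kb; apply: (le_trans (HK x' dxx')).
apply: (le_trans (ler_wpM2r d0 (ltW Kb))); rewrite mulrDl lerD2l.
by rewrite mulrAC ler_pdivrMr ?ltr_wpDl // ler_pM2l // lerDl.
Qed.

End l1dist.

Section mutual_expR_bound.
Context (R : realType).

Lemma norm_ln_div_le (a b c : R) : 0 < a -> 0 < b ->
  a <= expR c * b -> b <= expR c * a -> `|ln (b / a)| <= c.
Proof.
have ln_le u v : 0 < u -> 0 < v -> u <= expR c * v -> ln u <= c + ln v.
  move=> u0 v0 uv; rewrite -[c]expRK -lnM ?posrE ?expR_gt0 //.
  by rewrite ler_ln ?posrE ?mulr_gt0 ?expR_gt0.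
move=> a0 b0 /(ln_le _ _ a0 b0) lnab /(ln_le _ _ b0 a0) lnba.
by rewrite ln_div ?posrE // ler_norml; apply/andP; split; lra.
Qed.

Lemma mutual_expR_bound_cases (a b c : R) : 0 <= a -> 0 <= b ->
  a <= expR c * b -> b <= expR c * a ->
  (a = 0 /\ b = 0) \/ [/\ 0 < a, 0 < b & `|ln (b / a)| <= c].
Proof.
move=> a0 b0 ab ba; have [a_gt0|a_le0] := ltP 0 a.
  have b_gt0 : 0 < b.
    rewrite lt_def b0 andbT; apply: contraTneq a_gt0 => b_eq0.
    by rewrite -leNgt (le_trans ab) // b_eq0 mulr0.
  by right; split => //; exact: norm_ln_div_le.
have a_eq0 : a = 0 by apply/eqP; rewrite eq_le a_le0 a0.
by left; split => //; apply/eqP; rewrite eq_le b0 andbT (le_trans ba) // a_eq0 mulr0.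
Qed.

End mutual_expR_bound.

Section gencauchy_mechanism.
Context (R : realType).
Variables (U : Type) (m : nat) (f : U -> m.-tuple R) (B : U -> R) (eta p theta : R).
Hypotheses (p_gt1 : 1 < p) (theta_ge0 : 0 <= theta).
Local Notation Pr := (gencauchy_mech_prob f B eta p theta).

Let integrand_ge0 (S : set (m.-tuple R)) (t z : m.-tuple R) :
  0 <= (\1_S t : R) * \prod_(j < m) gencauchy_pdf p theta (tnth z j).
Proof.
by rewrite mulr_ge0 ?indicE ?ler0n // prodr_ge0 // => j _; exact: gencauchy_pdf_ge0.
Qed.

Lemma gencauchy_mech_prob_ge0 (x : U) (S : set (m.-tuple R)) : (0 <= Pr x S)%E.
Proof. by apply: iter_integral_ge0 => z; rewrite lee_fin. Qed.

(* With [r := B x' / B x] and [a := eta (f x' - f x) / B x], the substitution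
   [z = a + r w] maps the integrand of [Pr x S] onto that of [Pr x' S], up to
   the density ratio bounded in [gencauchy_prod_affine]. *)
Lemma gencauchy_mech_prob_le (x x' : U) (S : set (m.-tuple R)) (s : R) :
  0 < eta -> 0 < B x -> 0 < B x' -> `|ln (B x' / B x)| <= s ->
  (Pr x S <= (expR (m%:R * Num.max 1 (p * theta - 1) * s
      + theta * (p - 1) `^ ((p - 1) / p) * (eta / B x' * l1dist (f x') (f x))))%:E
    * Pr x' S)%E.
Proof.
move=> eta0 Bx0 Bx'0 lnr_s; set r := B x' / B x.
have r0 : 0 < r by rewrite divr_gt0.
pose a := [tuple (tnth (f x') i - tnth (f x) i) / (B x / eta) | i < m].
have affineE z : [tuple tnth (f x) i + B x / eta * tnth (affine_tuple a r z) i | i < m]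
    = [tuple tnth (f x') i + B x' / eta * tnth z i | i < m].
  apply: eq_from_tnth => i; rewrite !tnth_mktuple /r.
  by field; rewrite !lt0r_neq0.
have sum_aE : \sum_(j < m) `|tnth a j / r| = eta / B x' * l1dist (f x') (f x).
  rewrite /l1dist mulr_sumr; apply: eq_bigr => j _; rewrite tnth_mktuple /r.
  rewrite -[eta / B x']ger0_norm ?divr_ge0 ?ltW // -normrM; congr `|_|.
  by field; rewrite !lt0r_neq0.
rewrite -sum_aE /gencauchy_mech_prob.
apply: (le_trans (iter_integral_affine_le a r0 _)) => [z|].
  by rewrite lee_fin; exact: integrand_ge0.
rewrite -iter_integralZl; last 2 first.
- exact: expR_ge0.
- by move=> z; rewrite lee_fin; exact: integrand_ge0.
apply: le_iter_integral => z.
  by rewrite -EFinM lee_fin mulr_ge0 ?exprn_ge0 ?(ltW r0) ?integrand_ge0.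
rewrite affineE -!EFinM lee_fin mulrCA (mulrCA (expR _)).
apply: ler_wpM2l; first by rewrite indicE ler0n.
exact: gencauchy_prod_affine.
Qed.

End gencauchy_mechanism.

Theorem mainTheorem4 (R : realType) (U : Type) (dist : U -> U -> R)
  (gamma eta p theta : R) (Lambda : \bar R) (m : nat)
  (f : U -> m.-tuple R) (B : U -> R) :
  is_metric dist ->
  0 < gamma -> 0 < eta -> (0%E < Lambda)%E -> 1 < p -> 1 <= theta -> (1 <= m)%N ->
  smooth_upper_bound dist f Lambda (fun x x' => expR (gamma * dist x x')) B ->
  GP dist (gencauchy_mech_prob f B eta p theta)
    (Num.max (m%:R * gamma) (m%:R * (p * theta - 1) * gamma)
       + (p - 1) `^ ((p - 1) / p) * theta * eta)
    0 Lambda.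
Proof.
move=> [dist_ge0 _ distC _] gamma_gt0 eta_gt0 _ p_gt1 theta_ge1 _ [B_ge0 B_lip B_smooth].
move=> S _ x x' dxx'; rewrite adde0.
have theta_ge0 : 0 <= theta := le_trans ler01 theta_ge1.
have lip : l1dist (f x') (f x) <= B x' * dist x x'.
  by rewrite distC; apply: l1dist_le_localLip => //; rewrite distC.
have Bx'x : B x' <= expR (gamma * dist x x') * B x by rewrite distC; exact: B_smooth.
have [[Bx0 Bx'0]|[Bx_gt0 Bx'_gt0 lnr]] :=
  mutual_expR_bound_cases (B_ge0 x) (B_ge0 x') (B_smooth x x') Bx'x.
  have fxx' : f x = f x' by apply/esym/l1dist_le0; rewrite Bx'0 mul0r in lip.
  have -> : gencauchy_mech_prob f B eta p theta x S =
      gencauchy_mech_prob f B eta p theta x' S.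
    by rewrite /gencauchy_mech_prob Bx0 Bx'0 fxx'.
  apply: lee_pemull; first exact: gencauchy_mech_prob_ge0.
  rewrite lee_fin -expR0 ler_expR mulr_ge0 // addr_ge0 //.
    by rewrite le_max mulr_ge0 ?(ltW gamma_gt0).
  by rewrite !mulr_ge0 ?powR_ge0 ?(ltW eta_gt0).
apply: (le_trans (gencauchy_mech_prob_le f p_gt1 theta_ge0 S eta_gt0 Bx_gt0 Bx'_gt0 lnr)).
apply: lee_wpmul2r; first exact: gencauchy_mech_prob_ge0.
set Lp := (p - 1) `^ _; rewrite lee_fin ler_expR mulrDl; apply: lerD.
  by rewrite maxr_pMr ?ler0n // mulr1 mulrA maxr_pMl // ltW.
have : eta / B x' * l1dist (f x') (f x) <= eta * dist x x'.
  by rewrite -mulrA ler_pM2l // ler_pdivrMl.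
have := mulr_ge0 theta_ge0 (powR_ge0 (p - 1) ((p - 1) / p)); rewrite -/Lp.
nra.
Qed.
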